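(* Let $q\ge3$ be a prime power, $s\in\mathbb{N}$ with $s\mid q-1$, $\Gamma$ the subgroup of $\mathbb{F}_q^*$ of order $\frac{q-1}{s}$, and $H\subset\mathbb{F}_q^*$ a set of $r$ elements lying in pairwise distinct cosets of $\Gamma$. Let $H\Gamma=\{h\gamma:h\in H,\gamma\in\Gamma\}$ and $E=\{x(1,y)\in\mathbb{F}_q^2: x,y\in H\Gamma\}$. If $$(q-1)^6r^6+(q-1)s^5q^5r-s^6(q^6+q^5)>0$$ and $\varpi\colon(\mathbb{F}_q^2)^{\otimes 3}\to\mathbb{F}_q$ is a ternary form non-degenerate in some coordinate, then $\mathbb{F}_q^*\subset\varpi(E^3)=\{\varpi(x,y,z):x,y,z\in E\}$.
   Context: A 3-linear form $\varpi$ on $\mathbb{F}_q^2$ is non-degenerate in coordinate $j$ if for every nonzero $y\in\mathbb{F}_q^2$ the bilinear map obtained by fixing the $j$-th argument equal to $y$ is not identically zero. $\mathbb{F}_q^*=\mathbb{F}_q\setminus\{0\}$. *)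

From HB Require Import structures.
From mathcomp Require Import all_boot all_order all_algebra all_fingroup all_field.
Set Implicit Arguments. Unset Strict Implicit. Unset Printing Implicit Defensive.
Import GRing.Theory.
Local Open Scope ring_scope.

(* Vectors of F_q^2 are pairs (a, b) : F * F. A 3-linear form on F^2 is given
   by its coefficient tensor c : 'I_2 -> 'I_2 -> 'I_2 -> F. *)
Definition coord (F : ringType) (v : F * F) (i : 'I_2) : F :=
  if val i == 0%N then v.1 else v.2.

Definition form3 (F : ringType) (c : 'I_2 -> 'I_2 -> 'I_2 -> F)
  (x y z : F * F) : F :=
  \sum_(i < 2) \sum_(j < 2) \sum_(k < 2) c i j k * coord x i * coord y j * coord z k.

Definition nondeg_in (F : ringType) (c : 'I_2 -> 'I_2 -> 'I_2 -> F) (j : 'I_3) : Prop :=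
  forall v : F * F, v != (0, 0) ->
    exists u w : F * F,
      (if val j == 0%N then form3 c v u w
       else if val j == 1%N then form3 c u v w
       else form3 c u w v) != 0.

From Pilot Require Import Defs.
From HB Require Import structures.
From mathcomp Require Import all_boot all_order all_algebra all_fingroup all_field.
From mathcomp Require Import ring zify.
Set Implicit Arguments. Unset Strict Implicit. Unset Printing Implicit Defensive.
Import GRing.Theory.
Local Open Scope ring_scope.

(* The numerical hypothesis forces s < 2r, i.e. |HΓ| = r(q-1)/s > (q-1)/2, so
   by pigeonhole every t in F_q^* is a product of two elements of HΓ.
   A form non-degenerate in some coordinate is nonzero, and two distinct
   slopes a, b in HΓ give points (1,a), (1,b) spanning F_q^2; multilinearity
   therefore yields slopes y1, y2, y3 in HΓ with v = ϖ((1,y1),(1,y2),(1,y3)) ≠ 0.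
   Since ϖ(x1(1,y1), x2(1,y2), x3(1,y3)) = x1 x2 x3 v, fixing x3 in HΓ and
   writing t / (v x3) = x1 x2 with x1, x2 in HΓ reaches t. *)

Lemma main_ineq_lt_double (q s r : nat) :
  (s ^ 6 * (q ^ 6 + q ^ 5) < (q - 1) ^ 6 * r ^ 6 + (q - 1) * s ^ 5 * q ^ 5 * r)%N ->
  (s < 2 * r)%N.
Proof.
move=> hineq; rewrite ltnNge; apply: contraTN hineq => hsr; rewrite -leqNgt.
set p := (q - 1)%N; have hpq : (p <= q)%N by rewrite leq_subr.
have hpr : (p * (2 * r) <= q * s)%N by apply: leq_mul.
(* with [X = (q s)^6] the right-hand side is at most [X / 64 + X / 2 <= X] *)
have h6 : (64 * (p ^ 6 * r ^ 6) <= (q * s) ^ 6)%N.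
  by rewrite (_ : 64 * _ = (p * (2 * r)) ^ 6)%N ?leq_exp2r // !expnMn; ring.
have h1 : (2 * (p * s ^ 5 * q ^ 5 * r) <= (q * s) ^ 6)%N.
  rewrite (_ : 2 * _ = p * (2 * r) * (s ^ 5 * q ^ 5))%N; last by ring.
  by rewrite (_ : (q * s) ^ 6 = q * s * (s ^ 5 * q ^ 5))%N ?leq_mul // expnMn; ring.
rewrite (_ : s ^ 6 * _ = (q * s) ^ 6 + s ^ 6 * q ^ 5)%N; last by rewrite expnMn; ring.
move: h6 h1; set X := ((q * s) ^ 6)%N; set Y := (p ^ 6 * r ^ 6)%N.
set Z := (p * s ^ 5 * q ^ 5 * r)%N; set W := (s ^ 6 * q ^ 5)%N.
clearbody X Y Z W; lia.
Qed.

Lemma ltn_double_mul_divn (n s r : nat) :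
  (0 < n)%N -> (s %| n)%N -> (s < 2 * r)%N -> (n < 2 * (r * (n %/ s)))%N.
Proof.
move=> n_gt0 /divnK ksn s_lt; rewrite mulnA -{1}ksn mulnC ltn_pmul2r //.
by move: n_gt0; rewrite -{1}ksn muln_gt0 => /andP[].
Qed.

Section LinearFormsOnPlane.
Variable F : idomainType.

Definition plane_linear (l : F * F -> F) :=
  forall x, l x = x.1 * l (1, 0) + x.2 * l (0, 1).

Lemma plane_linear_eq0 (l : F * F -> F) a b x :
  plane_linear l -> a != b -> l (1, a) = 0 -> l (1, b) = 0 -> l x = 0.
Proof.
move=> hl ab; rewrite (hl (1, a)) (hl (1, b)) (hl x) /= !mul1r => la0 lb0.
have l01 : l (0, 1) = 0.
  have : (a - b) * l (0, 1) = (l (1, 0) + a * l (0, 1)) - (l (1, 0) + b * l (0, 1)).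
    by ring.
  by rewrite la0 lb0 subr0 => /eqP; rewrite mulf_eq0 subr_eq0 (negbTE ab) => /eqP.
by move: la0; rewrite l01 mulr0 addr0 => ->; rewrite !mulr0 addr0.
Qed.

Lemma plane_linear_line_neq0 (l : F * F -> F) (A : {pred F}) a b x :
  plane_linear l -> a \in A -> b \in A -> a != b -> l x != 0 ->
  exists2 y, y \in A & l (1, y) != 0.
Proof.
move=> hl aA bA ab.
have [la0|] := eqVneq (l (1, a)) 0; last by exists a.
have [lb0|] := eqVneq (l (1, b)) 0; last by exists b.
by rewrite (plane_linear_eq0 x hl ab la0 lb0) eqxx.
Qed.

Variable c : 'I_2 -> 'I_2 -> 'I_2 -> F.

Ltac expand_form3 := rewrite /form3 !big_ord_recl !big_ord0 /Defs.coord /=; ring.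

Lemma form3_linear1 y z : plane_linear (fun x => form3 c x y z).
Proof. by move=> x; expand_form3. Qed.

Lemma form3_linear2 x z : plane_linear (fun y => form3 c x y z).
Proof. by move=> y; expand_form3. Qed.

Lemma form3_linear3 x y : plane_linear (form3 c x y).
Proof. by move=> z; expand_form3. Qed.

Lemma form3_scale a1 a2 a3 y1 y2 y3 :
  form3 c (a1, a1 * y1) (a2, a2 * y2) (a3, a3 * y3) =
  a1 * a2 * a3 * form3 c (1, y1) (1, y2) (1, y3).
Proof. by expand_form3. Qed.

Lemma nondeg_form3_neq0 : (exists j, nondeg_in c j) -> exists x y z, form3 c x y z != 0.
Proof.
move=> [j /(_ (1, 0))]; rewrite xpair_eqE oner_eq0 => /(_ isT) [u [w]].
case: ifP => _; first by exists (1, 0), u, w.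
case: ifP => _; first by exists u, (1, 0), w.
by exists u, w, (1, 0).
Qed.

Lemma form3_lines_neq0 (A : {pred F}) a b :
  a \in A -> b \in A -> a != b -> (exists x y z, form3 c x y z != 0) ->
  exists y1 y2 y3, [/\ y1 \in A, y2 \in A, y3 \in A &
                      form3 c (1, y1) (1, y2) (1, y3) != 0].
Proof.
move=> aA bA ab [x [y [z]]].
move=> /(plane_linear_line_neq0 (form3_linear1 y z) aA bA ab) [y1 y1A].
move=> /(plane_linear_line_neq0 (form3_linear2 _ z) aA bA ab) [y2 y2A].
move=> /(plane_linear_line_neq0 (form3_linear3 _ _) aA bA ab) [y3 y3A].
by exists y1, y2, y3.
Qed.

End LinearFormsOnPlane.

Section FiniteField.
Variable F : finFieldType.

(* [u / B] is a copy of [B] inside [F^*], so it must meet [A] *)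
Lemma mul_sets_cover (A B : {set F}) u :
  0 \notin A -> 0 \notin B -> (#|F|.-1 < #|A| + #|B|)%N -> u != 0 ->
  exists a b, [/\ a \in A, b \in B & a * b = u].
Proof.
move=> A0 B0 hAB u0; pose C := [set u / b | b in B].
have nzB b : b \in B -> b != 0 by apply: contraTneq => ->.
have C0 : 0 \notin C.
  by apply/imsetP => -[b /nzB b0 /esym/eqP]; rewrite mulf_eq0 invr_eq0 (negPf u0) (negPf b0).
have cardC : #|C| = #|B| by apply: card_imset => b1 b2 /(mulfI u0)/invr_inj.
have [AC0|[a]] := set_0Vmem (A :&: C).
  suff : (#|A| + #|B| <= #|F|.-1)%N by rewrite leqNgt hAB.
  rewrite -cardC -cardsUI AC0 cards0 addn0 -(cardsC1 0).
  apply/subset_leq_card/subsetP => x; rewrite !inE; case: eqP => // ->.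
  by rewrite (negPf A0) (negPf C0).
rewrite inE => /andP [aA /imsetP [b bB ab]].
by exists a, b; split; rewrite // ab divfK ?nzB.
Qed.

Lemma val_unit_neq0 (g : {unit F}) : val g != 0.
Proof. by rewrite -unitfE (valP g). Qed.

Lemma card_transversal_mul (Gamma : {group {unit F}}) (H : {set F}) :
  (forall h, h \in H -> h != 0) ->
  (forall h1 h2, h1 \in H -> h2 \in H ->
     (exists2 g, g \in Gamma & h1 = h2 * val g) -> h1 = h2) ->
  #|[set h * val g | h in H, g in Gamma]| = (#|H| * #|Gamma|)%N.
Proof.
move=> nzH distinctH; rewrite curry_imset2X card_in_imset ?cardsX //.
move=> [h1 g1] [h2 g2] /setXP [/= h1H g1G] /setXP [/= h2H g2G] /= e.
have eh : h1 = h2.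
  apply: distinctH => //; exists (g2 * g1^-1)%g; first by rewrite groupM ?groupV.
  by rewrite FinRing.val_unitM FinRing.val_unitV mulrA -e mulrK // unitfE val_unit_neq0.
by move: e; rewrite eh => /(mulfI (nzH _ h2H)) /val_inj ->.
Qed.

End FiniteField.

Theorem mainTheorem8 (F : finFieldType) (s : nat)
  (Gamma : {group {unit F}}) (H : {set F})
  (c : 'I_2 -> 'I_2 -> 'I_2 -> F) :
  (3 <= #|F|)%N ->
  (s %| #|F|.-1)%N ->
  #|Gamma| = (#|F|.-1 %/ s)%N ->
  (forall h, h \in H -> h != 0) ->
  (forall h1 h2, h1 \in H -> h2 \in H ->
     (exists2 g, g \in Gamma & h1 = h2 * val g) -> h1 = h2) ->
  let q := #|F| in
  let r := #|H| in
  let HG := [set h * val g | h in H, g in Gamma] in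
  let E := [set (x, x * y) | x in HG, y in HG] in
  (s ^ 6 * (q ^ 6 + q ^ 5) < (q - 1) ^ 6 * r ^ 6 + (q - 1) * s ^ 5 * q ^ 5 * r)%N ->
  (exists j : 'I_3, nondeg_in c j) ->
  forall t : F, t != 0 ->
    exists x y z, [/\ x \in E, y \in E, z \in E & form3 c x y z = t].
Proof.
move=> q_ge3 s_dvd cardG nzH distinctH q r HG E ineq nondeg t t0.
have HG0 : 0 \notin HG.
  apply/imset2P => -[h g /nzH h0 _ /esym/eqP].
  by rewrite mulf_eq0 (negPf h0) (negPf (val_unit_neq0 g)).
have bigHG : (#|F|.-1 < #|HG| + #|HG|)%N.
  rewrite card_transversal_mul // cardG addnn -mul2n.
  by apply: (ltn_double_mul_divn _ s_dvd (main_ineq_lt_double ineq)); lia.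
have [a [b [aHG bHG ab]]] : exists a b, [/\ a \in HG, b \in HG & a != b].
  by apply/card_gt1P; lia.
have [y1 [y2 [y3 [y1HG y2HG y3HG v0]]]] :=
  form3_lines_neq0 aHG bHG ab (nondeg_form3_neq0 nondeg).
set v := form3 c (1, y1) (1, y2) (1, y3) in v0.
have a0 : a != 0 by apply: contraNneq HG0 => <-.
have [a1 [a2 [a1HG a2HG a12]]] :
    exists a1 a2, [/\ a1 \in HG, a2 \in HG & a1 * a2 = t / (v * a)].
  by apply: mul_sets_cover; rewrite // mulf_neq0 ?invr_eq0 ?mulf_neq0.
exists (a1, a1 * y1), (a2, a2 * y2), (a, a * y3).
split; try exact: imset2_f.
by rewrite form3_scale -/v a12 -mulrA [a * v]mulrC divfK ?mulf_neq0.
Qed.
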